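(* Let $n\ge 1$ and let $X_1,\dots,X_n$ be non-negative random variables defined on a common probability space, where for each $i\in[n]=\{1,\dots,n\}$ the variable $X_i$ has a continuous distribution function $F_i$. No assumption is made about the joint distribution of $(X_1,\dots,X_n)$ (in particular, independence is not assumed). Let $s>0$ and suppose $t(n,s)>0$ satisfies $$ s=\sum_{i=1}^n \int_0^{t(n,s)} x\, dF_i(x). $$ Then $$ \mathbb{E}\Big[\max\Big\{|A| : A\subset[n],\ \sum_{i\in A} X_i\le s\Big\}\Big]\le \sum_{i=1}^n F_i(t(n,s)). $$
   Context: $|A|$ denotes the cardinality of $A$; the empty set is allowed in the maximum, so the maximum is well defined. *)

From HB Require Import structures.
From mathcomp Require Import all_boot all_order all_algebra.
From mathcomp Require Import all_classical all_reals all_analysis.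
Set Implicit Arguments. Unset Strict Implicit. Unset Printing Implicit Defensive.
Import Order.TTheory GRing.Theory Num.Theory.
Local Open Scope ring_scope.

Definition distr_fun d (T : measurableType d) (R : realType)
  (P : probability T R) (X : {RV P >-> R}) (r : R) : R := fine (cdf X r).

(* max { |A| : A subset of [n], sum_{i in A} x_i <= s } (the empty set is
   always admissible, so the max is well defined; \max over nat with 0). *)
Definition max_subset_card (R : realType) (n : nat) (x : 'I_n -> R) (s : R) : nat :=
  \max_(A : {set 'I_n} | \sum_(i in A) x i <= s) #|A|.

(* Fix a realisation and any admissible A.  For every index i,
     t [i in A] + X_i [X_i <= t] <= t [X_i <= t] + X_i [i in A]
   (check the four cases), so summing over i and using sum_(i in A) X_i <= s
   gives the pointwise bound
     max_subset_card <= N + (s - S) / t,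
   with N = sum_i [X_i <= t] and S = sum_i X_i [X_i <= t].  Taking
   expectations, E[S] = s is exactly the defining equation of t and
   E[N] = sum_i F_i(t). *)

From HB Require Import structures.
From mathcomp Require Import all_boot all_order all_algebra.
From mathcomp Require Import all_classical all_reals all_analysis.
From mathcomp Require Import lra.
Import Order.TTheory GRing.Theory Num.Theory.
Local Open Scope ring_scope.

Lemma indicator_swap_le (R : realDomainType) (x t : R) (b : bool) :
  0 <= x -> 0 <= t ->
  t * b%:R + x * (x <= t)%R%:R <= t * (x <= t)%R%:R + x * b%:R.
Proof.
move=> x0 t0; case: b; case: lerP => xt; rewrite ?mulr1 ?mulr0 ?addr0 ?add0r //.
exact: ltW.
Qed.

Lemma max_subset_card_le (R : realType) (n : nat) (x : 'I_n -> R) (s t : R) :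
  (forall i, 0 <= x i) -> 0 <= s -> 0 < t ->
  (max_subset_card x s)%:R
    <= \sum_i (x i <= t)%R%:R + t^-1 * (s - \sum_i x i * (x i <= t)%R%:R).
Proof.
move=> x0 s0 t0.
have [A /= sumA ->] : {A : {set 'I_n} | \sum_(i in A) x i <= s
    & max_subset_card x s = #|A|}.
  by apply: eq_bigmax_cond; apply/card_gt0P; exists finset.set0; rewrite unfold_in big_set0.
have cardA : #|A|%:R = \sum_i (i \in A)%:R :> R.
  by rewrite -sum1_card natr_sum big_mkcond; apply: eq_bigr => i _; case: (i \in A).
have sumxA : \sum_(i in A) x i = \sum_i x i * (i \in A)%:R.
  by rewrite big_mkcond; apply: eq_bigr => i _; case: (i \in A); rewrite ?mulr1 ?mulr0.
have summed_swap : t * #|A|%:R + \sum_i x i * (x i <= t)%R%:R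
    <= t * \sum_i (x i <= t)%R%:R + \sum_(i in A) x i.
  rewrite cardA sumxA !mulr_sumr -!big_split /=.
  by apply: ler_sum => i _; exact: indicator_swap_le (ltW t0).
rewrite -(ler_pM2l t0) mulrDr mulVKf ?gt_eqF //.
lra.
Qed.

Section integral_bounds.
Local Open Scope ereal_scope.
Context d (T : measurableType d) (R : realType).

(* No measurability is needed: both integrals are suprema over the
   simple functions below the integrand. *)
Lemma ge0_le_integralT (mu : {measure set T -> \bar R}) (f g : T -> \bar R) :
  (forall x, 0 <= f x) -> (forall x, f x <= g x) ->
  \int[mu]_x f x <= \int[mu]_x g x.
Proof.
move=> f0 fg; have g0 x : 0 <= g x := le_trans (f0 x) (fg x).
rewrite !ge0_integralTE //; apply: ereal_sup_le => _ [h hf <-].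
by exists h => //= x; exact: le_trans (hf x) (fg x).
Qed.

Lemma indic_preimage_itvNy (f : T -> R) (t : R) (w : T) :
  \1_(f @^-1` `]-oo, t]) w = (f w <= t)%R%:R :> R.
Proof.
rewrite indicE.
case: (boolP (f w <= t)%R) => ft; first by rewrite mem_set //= in_itv /= ft.
by rewrite memNset //= in_itv /= (negbTE ft).
Qed.

Variable P : probability T R.

Lemma integral_cdf_indicator (X : {RV P >-> R}) (t : R) :
  \int[P]_w ((X w <= t)%R%:R)%:E = (distr_fun X t)%:E.
Proof.
under eq_integral do rewrite -indic_preimage_itvNy.
rewrite integral_indic ?setIT; last exact: measurable_funPTI.
rewrite /distr_fun fineK // fin_num_measure //.
exact: measurableT.
Qed.

Lemma integral_truncated (X : {RV P >-> R}) (t : R) : (forall w, 0 <= X w)%R ->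
  \int[P]_w (X w * (X w <= t)%R%:R)%:E
    = \int[distribution P X]_(x in `[0%R, t]) x%:E.
Proof.
move=> X0; rewrite ge0_integral_pushforward //; last first.
  by move=> y; rewrite inE /= in_itv /= => /andP[y0 _]; rewrite lee_fin.
rewrite [RHS]integral_mkcond; apply: eq_integral => w _; rewrite patchE.
case: lerP => Xt; rewrite ?mulr1 ?mulr0.
  by rewrite mem_set //= in_itv /= X0 Xt.
by rewrite memNset //= in_itv /= (leNgt (X w)) Xt andbF.
Qed.

Lemma measurable_le_indicator (f : {mfun T >-> R}) (t : R) :
  measurable_fun setT (fun w => (f w <= t)%R%:R : R).
Proof.
rewrite (_ : (fun w => _) = \1_(f @^-1` `]-oo, t])); last first.
  by apply/funext => w; rewrite indic_preimage_itvNy.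
exact/measurable_realfun.measurable_indic/measurable_funPTI.
Qed.

Lemma measurable_truncated (f : {mfun T >-> R}) (t : R) :
  measurable_fun setT (fun w => f w * (f w <= t)%R%:R)%R.
Proof.
by apply: measurable_realfun.measurable_funM => //; exact: measurable_le_indicator.
Qed.

Lemma integral_addr_cst_cancel (f g h : T -> R) (c : R) :
  measurable_fun setT f -> measurable_fun setT g -> measurable_fun setT h ->
  (forall w, 0 <= f w)%R -> (forall w, 0 <= g w)%R -> (forall w, 0 <= h w)%R ->
  (0 <= c)%R -> (forall w, f w + g w = h w + c)%R ->
  \int[P]_w (g w)%:E = c%:E -> \int[P]_w (f w)%:E = \int[P]_w (h w)%:E.
Proof.
move=> mf mg mh f0 g0 h0 c0 fgh intg.
have : \int[P]_w ((f w)%:E + (g w)%:E) = \int[P]_w ((h w)%:E + c%:E).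
  by apply: eq_integral => w _; rewrite -!EFinD fgh.
rewrite !ge0_integralD //; try (by move=> w _; rewrite lee_fin);
  try exact/measurable_realfun.measurable_EFinP; try exact: measurable_cst.
have -> : \int[P]_w c%:E = c%:E.
  by rewrite integral_cst // -[RHS]mule1; congr (_ * _); exact: probability_setT.
rewrite intg => /(congr1 (fun z => z - c%:E)).
by rewrite !addeK.
Qed.

Lemma integral_sum_le_indicator (n : nat) (X : 'I_n -> {RV P >-> R}) (t : R) :
  \int[P]_w (\sum_i (X i w <= t)%R%:R)%:E = (\sum_i distr_fun (X i) t)%:E.
Proof.
under eq_integral do rewrite -sumEFin.
rewrite ge0_integral_sum // -?sumEFin.
- by apply: eq_bigr => i _; exact: integral_cdf_indicator.
- by move=> i; exact/measurable_realfun.measurable_EFinP/measurable_le_indicator.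
Qed.

Lemma integral_sum_truncated (n : nat) (X : 'I_n -> {RV P >-> R}) (t : R) :
  (forall i w, 0 <= X i w)%R ->
  \int[P]_w (\sum_i X i w * (X i w <= t)%R%:R)%:E
    = \sum_i \int[distribution P (X i)]_(x in `[0%R, t]) x%:E.
Proof.
move=> X0; under eq_integral do rewrite -sumEFin.
rewrite ge0_integral_sum //.
- by apply: eq_bigr => i _; exact: integral_truncated.
- by move=> i; exact/measurable_realfun.measurable_EFinP/measurable_truncated.
- by move=> i w _; rewrite lee_fin mulr_ge0.
Qed.

Lemma integral_max_subset_card_majorant (n : nat) (X : 'I_n -> {RV P >-> R})
    (s t : R) :
  (forall i w, 0 <= X i w)%R -> (0 <= s)%R -> (0 < t)%R ->
  s%:E = \sum_i \int[distribution P (X i)]_(x in `[0%R, t]) x%:E ->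
  \int[P]_w (\sum_i (X i w <= t)%R%:R
               + t^-1 * (s - \sum_i X i w * (X i w <= t)%R%:R))%R%:E
    = (\sum_i distr_fun (X i) t)%:E.
Proof.
move=> X0 s0 t0 hs.
pose N w : R := (\sum_i (X i w <= t)%R%:R)%R.
pose S w : R := (\sum_i X i w * (X i w <= t)%R%:R)%R.
have mS : measurable_fun setT S.
  by apply: measurable_sum => i; exact: measurable_truncated.
have t'0 : (0 <= t^-1)%R by rewrite invr_ge0 ltW.
rewrite (@integral_addr_cst_cancel _ (fun w => t^-1 * S w)%R N (t^-1 * s)%R).
- exact: integral_sum_le_indicator.
- apply: measurable_realfun.measurable_funD.
    by apply: measurable_sum => i; exact: measurable_le_indicator.
  apply: measurable_realfun.measurable_funM => //.
  exact: measurable_realfun.measurable_funB.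
- exact: measurable_realfun.measurable_funM.
- by apply: measurable_sum => i; exact: measurable_le_indicator.
- move=> w; apply: le_trans (ler0n _ _) _.
  exact: max_subset_card_le (fun i => X0 i w) s0 t0.
- by move=> w; apply/mulr_ge0/sumr_ge0 => // i _; rewrite mulr_ge0.
- by move=> w; apply: sumr_ge0.
- exact: mulr_ge0.
- by move=> w; rewrite -addrA -mulrDr subrK.
under eq_integral do rewrite EFinM.
rewrite ge0_integralZl_EFin //.
- by rewrite integral_sum_truncated // -hs EFinM.
- by move=> w _; rewrite lee_fin sumr_ge0 // => i _; rewrite mulr_ge0.
- exact/measurable_realfun.measurable_EFinP.
Qed.

End integral_bounds.

Import numFieldTopology.Exports.
Local Open Scope classical_set_scope.

Theorem theorem1 (d : measure_display) (T : measurableType d) (R : realType)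
  (P : probability T R) (n : nat) (X : 'I_n -> {RV P >-> R}) (s t : R) :
  (1 <= n)%N ->
  (forall i w, 0 <= X i w) ->
  (forall i, continuous (distr_fun (X i))) ->
  0 < s -> 0 < t ->
  s%:E = (\sum_(i < n) \int[distribution P (X i)]_(x in `[0%R, t%R]) x%:E)%E ->
  (expectation P (fun w => ((max_subset_card (fun i => X i w) s)%:R)%R)
     <= (\sum_(i < n) distr_fun (X i) t)%:E)%E.
Proof.
move=> _ X0 _ s0 t0 hs; rewrite unlock.
rewrite -(@integral_max_subset_card_majorant _ _ _ P _ X s t X0 (ltW s0) t0 hs).
apply: ge0_le_integralT => w; rewrite lee_fin //.
exact: max_subset_card_le (ltW s0) t0.
Qed.
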